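(* Let $\gamma_a,\gamma_s>0$, $\lambda\ge 0$, $q>0$, $\sigma_B>0$ and $\varepsilon_a\in(0,2)$. Let $\beta_a,\beta_s:\mathbb R\to\mathbb R$ be globally Lipschitz continuous with $\beta_a\ge 0$ and $\beta_s>0$, and set $\mathcal R_a(T_a)=q\beta_a(T_a)$, $\mathcal R_s(T_s)=q\beta_s(T_s)$. Let $T_a^{(0)}\ge 0$ and $T_s^{(0)}\ge 0$. Then the problem \[ \begin{cases} \gamma_a T_a'=-\lambda(T_a-T_s)+\varepsilon_a\sigma_B|T_s|^3T_s-2\varepsilon_a\sigma_B|T_a|^3T_a+\mathcal R_a(T_a),\\ \gamma_s T_s'=-\lambda(T_s-T_a)-\sigma_B|T_s|^3T_s+\varepsilon_a\sigma_B|T_a|^3T_a+\mathcal R_s(T_s),\\ T_a(0)=T_a^{(0)},\quad T_s(0)=T_s^{(0)} \end{cases} \] admits a unique solution, which is defined and bounded on $[0,+\infty)$. Moreover, $T_a(t)>0$ and $T_s(t)>0$ for every $t\in(0,+\infty)$. *)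

From Stdlib Require Import Reals.
From Coquelicot Require Import Coquelicot.
Open Scope R_scope.

Definition lipschitz (f : R -> R) : Prop :=
  exists L : R, 0 <= L /\ forall x y : R, Rabs (f x - f y) <= L * Rabs (x - y).

Definition rhs_a (lam eps sigB q : R) (beta_a : R -> R) (Ta Ts : R) : R :=
  - lam * (Ta - Ts) + eps * sigB * (Rabs Ts ^ 3 * Ts)
  - 2 * eps * sigB * (Rabs Ta ^ 3 * Ta) + q * beta_a Ta.

Definition rhs_s (lam eps sigB q : R) (beta_s : R -> R) (Ta Ts : R) : R :=
  - lam * (Ts - Ta) - sigB * (Rabs Ts ^ 3 * Ts)
  + eps * sigB * (Rabs Ta ^ 3 * Ta) + q * beta_s Ts.

Definition solution_on (ga gs lam eps sigB q : R) (beta_a beta_s : R -> R)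
    (Ta0 Ts0 T : R) (Ta Ts : R -> R) : Prop :=
  Ta 0 = Ta0 /\ Ts 0 = Ts0 /\
  filterlim Ta (at_right 0) (locally (Ta 0)) /\
  filterlim Ts (at_right 0) (locally (Ts 0)) /\
  (forall t, 0 < t < T ->
     is_derive Ta t ((rhs_a lam eps sigB q beta_a (Ta t) (Ts t)) / ga) /\
     is_derive Ts t ((rhs_s lam eps sigB q beta_s (Ta t) (Ts t)) / gs)).

(* Truncating the right-hand side outside the box [0, M]^2 makes it bounded and globally
   Lipschitz, so Picard iteration gives a global solution.  A comparison argument keeps that
   solution in the box: on the axes the field points inwards, and the energy
   E = ga Ta + c gs Ts with c = (2 + eps) / 2 satisfies
   E' <= A + B (Ta + Ts) - kappa (Ta^4 + Ts^4), which is negative once either temperature is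
   large, so E stays below an explicit level.  For M above that level the truncation is
   inactive and the truncated solution solves the original system.  Uniqueness is a Gronwall
   argument on exp (- C t) |U - Y|^2 using the Lipschitz bound near the bounded solution, and
   positivity comes from the sign of the derivative at a first zero. *)

From Stdlib Require Import Reals Lra Lia.
From Coquelicot Require Import Coquelicot.
Open Scope R_scope.

Definition lipschitz_with (K : R) (f : R -> R) : Prop :=
  forall x y, Rabs (f x - f y) <= K * Rabs (x - y).

Lemma lipschitz_with_nonneg K f (x y : R) : lipschitz_with K f -> x <> y -> 0 <= K.
Proof.
  intros Hf Hxy. specialize (Hf x y).
  pose proof (Rabs_pos (f x - f y)). pose proof (Rabs_pos_lt (x - y) ltac:(lra)). nra.
Qed.

Lemma lipschitz_continuous K f x : lipschitz_with K f -> continuous f x.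
Proof.
  intros Hf. apply continuity_pt_filterlim. intros e He.
  assert (HK : 0 <= K) by exact (lipschitz_with_nonneg K f 0 1 Hf ltac:(lra)).
  exists (e / (K + 1)). split; [apply Rdiv_lt_0_compat; lra|].
  intros y [_ Hy]. simpl in *. unfold R_dist in *.
  apply (Rle_lt_trans _ (K * Rabs (y - x))); [apply Hf|].
  apply (Rle_lt_trans _ ((K + 1) * Rabs (y - x))); [pose proof (Rabs_pos (y - x)); nra|].
  apply (Rmult_lt_compat_l (K + 1)) in Hy; [|lra].
  replace ((K + 1) * (e / (K + 1))) with e in Hy by (field; lra). exact Hy.
Qed.

Lemma lipschitz_ex_RInt K f a b : lipschitz_with K f -> ex_RInt f a b.
Proof.
  intros Hf. apply (ex_RInt_continuous (V := R_CompleteNormedModule)).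
  intros z _. exact (lipschitz_continuous K f z Hf).
Qed.

Lemma lipschitz_with_lim K (f : nat -> R -> R) (F : R -> R) :
  (forall n, lipschitz_with K (f n)) -> (forall t, is_lim_seq (fun n => f n t) (F t)) ->
  lipschitz_with K F.
Proof.
  intros Hf HF x y.
  assert (Hl := is_lim_seq_abs _ _ (is_lim_seq_minus' _ _ _ _ (HF x) (HF y))).
  exact (is_lim_seq_le _ _ _ _ (fun n => Hf n x y) Hl (is_lim_seq_const _)).
Qed.

Lemma lipschitz_with_Rmax0 K f : 0 <= K -> lipschitz_with K f -> lipschitz_with K (fun t => f (Rmax 0 t)).
Proof.
  intros HK Hf x y. eapply Rle_trans; [apply Hf|]. apply Rmult_le_compat_l; [exact HK|].
  unfold Rmax. destruct (Rle_dec 0 x), (Rle_dec 0 y); unfold Rabs; repeat destruct Rcase_abs; lra.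
Qed.

Lemma RInt_0_diff_le (h : R -> R) F s t :
  (forall a b, ex_RInt h a b) -> (forall u, Rabs (h u) <= F) ->
  Rabs (RInt h 0 t - RInt h 0 s) <= F * Rabs (t - s).
Proof.
  intros Hex Hb.
  rewrite <- (RInt_Chasles (V := R_CompleteNormedModule) h 0 s t) by auto.
  change (plus (RInt h 0 s) (RInt h s t)) with (RInt h 0 s + RInt h s t).
  rewrite Rplus_minus_l.
  rewrite Rmult_comm. destruct (Rle_or_lt s t).
  - rewrite (Rabs_right (t - s)) by lra. apply abs_RInt_le_const; auto.
  - rewrite <- (opp_RInt_swap h t s) by auto. change (opp (RInt h t s)) with (- RInt h t s).
    rewrite Rabs_Ropp, (Rabs_left (t - s)) by lra.
    replace (- (t - s)) with (s - t) by ring. apply abs_RInt_le_const; auto; lra.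
Qed.

Lemma is_derive_RInt_0 (f h : R -> R) c K t :
  lipschitz_with K h -> 0 < t -> (forall b, 0 <= b -> f b = c + RInt h 0 b) ->
  is_derive f t (h t).
Proof.
  intros Hh Ht Hf.
  assert (Hd : is_derive (fun b => RInt h 0 b) t (h t)).
  { apply (is_derive_RInt (V := R_CompleteNormedModule) h _ 0).
    - apply filter_forall. intros b. apply (RInt_correct (V := R_CompleteNormedModule)).
      exact (lipschitz_ex_RInt K h 0 b Hh).
    - exact (lipschitz_continuous K h t Hh). }
  apply (is_derive_ext_loc (fun b => c + RInt h 0 b)).
  - exists (mkposreal t Ht). intros y Hy. rewrite Hf; [reflexivity|].
    change (Rabs (y - t) < t) in Hy. apply Rabs_def2 in Hy. lra.
  - assert (Hc := is_derive_plus (fun _ => c) _ t zero (h t) (is_derive_const c t) Hd).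
    rewrite plus_zero_l in Hc. exact Hc.
Qed.

(** * Right continuity and a comparison principle *)

Definition right_cont (f : R -> R) (t : R) : Prop := filterlim f (at_right t) (locally (f t)).

Lemma continuous_right_cont f t : continuous f t -> right_cont f t.
Proof.
  apply filterlim_filter_le_1. intros P HP. exact (filter_imp _ _ (fun _ H _ => H) HP).
Qed.

Lemma right_cont_plus f g t : right_cont f t -> right_cont g t -> right_cont (fun s => f s + g s) t.
Proof. intros Hf Hg. exact (filterlim_comp_2 _ _ Rplus Hf Hg (filterlim_plus (f t) (g t))). Qed.

Lemma right_cont_mult f g t : right_cont f t -> right_cont g t -> right_cont (fun s => f s * g s) t.
Proof. intros Hf Hg. exact (filterlim_comp_2 _ _ Rmult Hf Hg (filterlim_mult (f t) (g t))). Qed.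

Lemma right_cont_comp h f t : continuous h (f t) -> right_cont f t -> right_cont (fun s => h (f s)) t.
Proof. intros Hh Hf. exact (filterlim_comp _ _ _ _ h _ _ _ Hf Hh). Qed.

Lemma right_cont_near f t e : right_cont f t -> 0 < e -> at_right t (fun s => Rabs (f s - f t) < e).
Proof. intros Hf He. exact (Hf _ (locally_ball (f t) (mkposreal e He))). Qed.

Lemma right_cont_const c t : right_cont (fun _ => c) t.
Proof. apply filterlim_const. Qed.

Lemma right_cont_opp f t : right_cont f t -> right_cont (fun s => - f s) t.
Proof. intros Hf. exact (filterlim_comp _ _ _ _ Ropp _ _ _ Hf (filterlim_opp (f t))). Qed.

Lemma right_cont_minus f g t : right_cont f t -> right_cont g t -> right_cont (fun s => f s - g s) t.
Proof. intros Hf Hg. exact (right_cont_plus _ _ _ Hf (right_cont_opp _ _ Hg)). Qed.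

Lemma at_right_interval t P : at_right t P -> exists d, 0 < d /\ forall s, t < s < t + d -> P s.
Proof.
  intros [d Hd]. exists d. split; [apply cond_pos|]. intros s Hs. apply Hd; [|lra].
  change (Rabs (s - t) < d). rewrite Rabs_right; lra.
Qed.

Lemma last_nonpos_point (g : R -> R) t :
  0 <= t -> g 0 <= 0 -> 0 < g t -> (forall s, 0 < s <= t -> continuous g s) ->
  exists t0, 0 <= t0 < t /\ g t0 <= 0 /\ forall s, t0 < s <= t -> 0 < g s.
Proof.
  intros Ht Hg0 Hgt Hc.
  set (E := fun s => 0 <= s <= t /\ g s <= 0).
  destruct (completeness E) as [t0 [Hub Hlub]].
  { exists t. intros s [Hs _]. lra. }
  { exists 0. split; lra. }
  assert (Ht0 : 0 <= t0 <= t) by (split; [apply Hub; split; lra | apply Hlub; intros s [Hs _]; lra]).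
  assert (Hgt0 : g t0 <= 0).
  { destruct (Rle_or_lt (g t0) 0) as [|Hpos]; [assumption|exfalso].
    assert (Hnz : t0 <> 0) by (intros ->; lra).
    destruct (Hc t0 ltac:(lra) _ (locally_ball (g t0) (mkposreal _ Hpos))) as [d Hd].
    assert (Hd' : forall s, t0 - d < s <= t0 -> 0 < g s).
    { intros s Hs. assert (Hb := Hd s ltac:(change (Rabs (s - t0) < d); rewrite Rabs_left1; lra)).
      change (Rabs (g s - g t0) < g t0) in Hb. apply Rabs_def2 in Hb. lra. }
    assert (t0 <= t0 - d); [|pose proof (cond_pos d); lra].
    apply Hlub. intros s [Hs Hgs]. destruct (Rle_or_lt s (t0 - d)) as [Hle | Hnear]; [exact Hle|].
    pose proof (Hd' s (conj Hnear (Hub s (conj Hs Hgs)))). lra. }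
  exists t0. split; [split; [lra|]|split; [exact Hgt0|]].
  - destruct (Rle_lt_or_eq _ _ (proj2 Ht0)) as [ | ->]; [assumption|lra].
  - intros s Hs. destruct (Rle_or_lt (g s) 0) as [Hgs|]; [|assumption].
    assert (s <= t0) by (apply Hub; split; lra). lra.
Qed.

(* Right after the last point [t0] where [g <= 0], [g] would have to increase while [Q]
   holds, contradicting [dg <= 0] by the mean value theorem. *)
Lemma nonpos_barrier (g dg : R -> R) (T : R) (Q : R -> Prop) :
  g 0 <= 0 -> right_cont g 0 ->
  (forall t, 0 < t < T -> is_derive g t (dg t)) ->
  (forall t, 0 <= t < T -> g t <= 0 -> at_right t Q) ->
  (forall t, 0 < t < T -> 0 < g t -> Q t -> dg t <= 0) ->
  forall t, 0 <= t < T -> g t <= 0.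
Proof.
  intros Hg0 Hrc0 Hd HQ Hdg t Ht. destruct (Rle_or_lt (g t) 0) as [|Hgt]; [assumption|exfalso].
  assert (Hc : forall s, 0 < s < T -> continuous g s)
    by (intros s Hs; exact (ex_derive_continuous g s (ex_intro _ (dg s) (Hd s Hs)))).
  destruct (last_nonpos_point g t ltac:(lra) Hg0 Hgt ltac:(intros; apply Hc; lra))
    as [t0 [Ht0 [Hgt0 Hpos]]].
  destruct (at_right_interval _ _ (HQ t0 ltac:(lra) Hgt0)) as [d1 [Hd1 HQ1]].
  set (t2 := Rmin t (t0 + d1 / 2)).
  assert (Ht2 : t0 < t2 <= t /\ t2 < t0 + d1).
  { unfold t2. split; [split; [apply Rmin_glb_lt; lra | apply Rmin_l]|].
    pose proof (Rmin_r t (t0 + d1 / 2)). lra. }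
  assert (Hg2 := Hpos t2 ltac:(lra)).
  assert (Hrc : right_cont g t0).
  { destruct (Rle_lt_or_eq _ _ (proj1 Ht0)) as [ | <-]; [|exact Hrc0].
    apply continuous_right_cont, Hc. lra. }
  destruct (at_right_interval _ _ (right_cont_near g t0 _ Hrc Hg2)) as [d2 [Hd2 Hnear]].
  set (t1 := t0 + Rmin d2 (t2 - t0) / 2).
  assert (Ht1 : t0 < t1 < t2 /\ t1 < t0 + d2).
  { assert (0 < Rmin d2 (t2 - t0)) by (apply Rmin_glb_lt; lra).
    pose proof (Rmin_l d2 (t2 - t0)). pose proof (Rmin_r d2 (t2 - t0)). unfold t1. lra. }
  assert (Hg1 : g t1 < g t2).
  { assert (Hn := Hnear t1 ltac:(lra)). apply Rabs_def2 in Hn. lra. }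
  destruct (MVT_gen g t1 t2 dg) as [c [Hc12 Hmvt]];
    rewrite ?Rmin_left, ?Rmax_right in * by lra.
  - intros x Hx. apply Hd. lra.
  - intros x Hx. apply continuity_pt_filterlim, Hc. lra.
  - assert (dg c <= 0) by (apply Hdg; [lra | apply Hpos; lra | apply HQ1; lra]). nra.
Qed.

Lemma is_derive_pos_root (f : R -> R) t0 t l :
  t0 < t -> is_derive f t l -> 0 < l -> f t = 0 -> exists s, t0 < s < t /\ f s < 0.
Proof.
  intros Ht Hd Hl Hf. apply is_derive_Reals in Hd.
  destruct (Hd l Hl) as [d Hdel].
  set (h := - Rmin (d / 2) ((t - t0) / 2)).
  assert (Hm : 0 < Rmin (d / 2) ((t - t0) / 2)) by (apply Rmin_glb_lt; pose proof (cond_pos d); lra).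
  pose proof (Rmin_l (d / 2) ((t - t0) / 2)). pose proof (Rmin_r (d / 2) ((t - t0) / 2)).
  assert (Hh : h < 0) by (unfold h; lra).
  specialize (Hdel h ltac:(lra) ltac:(unfold h; rewrite Rabs_Ropp, Rabs_right; pose proof (cond_pos d); lra)).
  rewrite Hf, Rminus_0_r in Hdel. apply Rabs_def2 in Hdel.
  exists (t + h). split; [unfold h; lra|].
  assert (0 < f (t + h) / h) by lra.
  assert (f (t + h) = f (t + h) / h * h) by (field; lra). nra.
Qed.

Lemma is_lim_seq_half_pow C : is_lim_seq (fun n => C * (/ 2) ^ n) 0.
Proof.
  replace (Finite 0) with (Rbar_mult C 0) by (simpl; f_equal; ring).
  apply is_lim_seq_scal_l, is_lim_seq_geom. rewrite Rabs_right; lra.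
Qed.

Lemma is_lim_seq_half_pow_bound (u : nat -> R) l C :
  (forall n, Rabs (u n - l) <= C * (/ 2) ^ n) -> is_lim_seq u l.
Proof.
  intros Hu. apply (is_lim_seq_le_le (fun n => l - C * (/ 2) ^ n) _ (fun n => l + C * (/ 2) ^ n)).
  - intros n. specialize (Hu n). apply Rabs_le_between in Hu. lra.
  - replace (Finite l) with (Rbar_minus l 0) by (simpl; f_equal; ring).
    apply is_lim_seq_minus'; [apply is_lim_seq_const | apply is_lim_seq_half_pow].
  - replace (Finite l) with (Rbar_plus l 0) by (simpl; f_equal; ring).
    apply is_lim_seq_plus'; [apply is_lim_seq_const | apply is_lim_seq_half_pow].
Qed.

Lemma half_pow_cauchy (u : nat -> R) C :
  (forall n, Rabs (u (S n) - u n) <= C * (/ 2) ^ n) ->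
  exists l : R, is_lim_seq u l /\ forall n, Rabs (u n - l) <= 2 * C * (/ 2) ^ n.
Proof.
  intros Hu.
  assert (HC : 0 <= C) by (specialize (Hu O); pose proof (Rabs_pos (u 1%nat - u O)); simpl in Hu; lra).
  assert (Htel : forall n p, Rabs (u (n + p)%nat - u n) <= 2 * C * (/ 2) ^ n - 2 * C * (/ 2) ^ (n + p)).
  { intros n p. induction p as [|p IH].
    - rewrite Nat.add_0_r, Rminus_eq_0, Rabs_R0. lra.
    - rewrite Nat.add_succ_r.
      replace (u (S (n + p)) - u n) with ((u (S (n + p)) - u (n + p)%nat) + (u (n + p)%nat - u n)) by ring.
      eapply Rle_trans; [apply Rabs_triang|]. pose proof (Hu (n + p)%nat). simpl pow. lra. }
  assert (Hfar : forall n p, Rabs (u (n + p)%nat - u n) <= 2 * C * (/ 2) ^ n).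
  { intros n p. pose proof (pow_le (/ 2) (n + p) ltac:(lra)). specialize (Htel n p). nra. }
  assert (Hcv : ex_finite_lim_seq u).
  { apply ex_lim_seq_cauchy_corr. intros e.
    assert (He : 0 < e / 4) by (pose proof (cond_pos e); lra).
    destruct (proj2 (is_lim_seq_spec _ _) (is_lim_seq_half_pow (2 * C)) (mkposreal _ He)) as [N HN].
    exists N. intros n m Hn Hm.
    assert (Hfar' : forall k, (N <= k)%nat -> Rabs (u k - u N) < e / 2).
    { intros k Hk. replace k with (N + (k - N))%nat by lia.
      specialize (HN N (Nat.le_refl N)). simpl in HN. rewrite Rminus_0_r in HN.
      apply Rabs_lt_between in HN. pose proof (Hfar N (k - N)%nat). lra. }
    replace (u n - u m) with ((u n - u N) - (u m - u N)) by ring.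
    eapply Rle_lt_trans; [apply Rabs_triang|]. rewrite Rabs_Ropp.
    pose proof (Hfar' n Hn). pose proof (Hfar' m Hm). lra. }
  destruct Hcv as [l Hl]. exists l. split; [exact Hl|]. intros n.
  rewrite Rabs_minus_sym.
  apply (is_lim_seq_incr_n _ n) in Hl.
  assert (Hd := is_lim_seq_abs _ _ (is_lim_seq_minus' _ _ _ _ Hl (is_lim_seq_const (u n)))).
  refine (is_lim_seq_le _ _ _ _ _ Hd (is_lim_seq_const _)).
  intros p. rewrite Nat.add_comm. apply Hfar.
Qed.

(** * Picard iteration for a bounded, globally Lipschitz planar field *)

Lemma RInt_diff_le (f g e : R -> R) t :
  0 <= t -> ex_RInt f 0 t -> ex_RInt g 0 t -> ex_RInt e 0 t ->
  (forall u, 0 <= u <= t -> Rabs (f u - g u) <= e u) ->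
  Rabs (RInt f 0 t - RInt g 0 t) <= RInt e 0 t.
Proof.
  intros Ht Hf Hg He Hfg.
  assert (Hd : ex_RInt (fun u => f u - g u) 0 t) by exact (ex_RInt_minus (V := R_NormedModule) f g 0 t Hf Hg).
  change (Rabs (minus (RInt f 0 t) (RInt g 0 t)) <= RInt e 0 t).
  rewrite <- (RInt_minus (V := R_CompleteNormedModule) f g 0 t Hf Hg).
  eapply Rle_trans; [apply abs_RInt_le; assumption|].
  apply RInt_le; [assumption | exact (ex_RInt_norm _ _ _ Hd) | assumption |].
  intros u Hu. apply Hfg. lra.
Qed.

Lemma RInt_exp_scaled c k t : 0 < k -> RInt (fun u => c * exp (k * u)) 0 t = c * (exp (k * t) - 1) / k.
Proof.
  intros Hk. apply is_RInt_unique.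
  replace (c * (exp (k * t) - 1) / k) with (minus (c * exp (k * t) / k) (c * exp (k * 0) / k))
    by (rewrite Rmult_0_r, exp_0; unfold minus, plus, opp; simpl; field; lra).
  apply (is_RInt_derive (fun u => c * exp (k * u) / k)).
  - intros x _. auto_derive; [exact I | field; lra].
  - intros x _. apply (ex_derive_continuous (fun u => c * exp (k * u))). auto_derive. exact I.
Qed.

Definition lipschitz2 (L : R) (G : R -> R -> R) : Prop :=
  forall x y x' y', Rabs (G x y - G x' y') <= L * (Rabs (x - x') + Rabs (y - y')).

Definition dist2 (p p' : R * R) : R := Rabs (fst p - fst p') + Rabs (snd p - snd p').

Definition along (G : R -> R -> R) (f : R -> R * R) (u : R) : R := G (fst (f u)) (snd (f u)).

Definition lipschitz_path (K : R) (f : R -> R * R) : Prop :=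
  lipschitz_with K (fun t => fst (f t)) /\ lipschitz_with K (fun t => snd (f t)).

Lemma lipschitz2_le L L' G : L <= L' -> lipschitz2 L G -> lipschitz2 L' G.
Proof.
  intros HL HG x y x' y'. eapply Rle_trans; [apply HG|].
  apply Rmult_le_compat_r; [pose proof (Rabs_pos (x - x')); pose proof (Rabs_pos (y - y')); lra | exact HL].
Qed.

Lemma along_diff_le L G f g u : lipschitz2 L G -> Rabs (along G f u - along G g u) <= L * dist2 (f u) (g u).
Proof. intros HG. apply HG. Qed.

Lemma along_lipschitz L K G f :
  0 <= L -> lipschitz2 L G -> lipschitz_path K f -> lipschitz_with (2 * L * K) (along G f).
Proof.
  intros HL HG [H1 H2] s t. eapply Rle_trans; [apply HG|].
  specialize (H1 s t). specialize (H2 s t). simpl in H1, H2. nra.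
Qed.

Lemma along_ex_RInt L K G f a b : 0 <= L -> lipschitz2 L G -> lipschitz_path K f -> ex_RInt (along G f) a b.
Proof. intros HL HG Hf. exact (lipschitz_ex_RInt _ _ a b (along_lipschitz L K G f HL HG Hf)). Qed.

Lemma integral_map_lipschitz L K F G f c :
  0 <= L -> lipschitz2 L G -> (forall x y, Rabs (G x y) <= F) -> lipschitz_path K f ->
  lipschitz_with F (fun t => c + RInt (along G f) 0 t).
Proof.
  intros HL HG HF Hf s t. rewrite Rminus_plus_l_l.
  apply RInt_0_diff_le; [|exact (fun u => HF _ _)].
  intros a b. exact (along_ex_RInt L K G f a b HL HG Hf).
Qed.

Section Picard.

Variables (Fa Fs : R -> R -> R) (F L a0 s0 : R).
Hypothesis L_pos : 0 < L.
Hypothesis Fa_bounded : forall x y, Rabs (Fa x y) <= F.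
Hypothesis Fs_bounded : forall x y, Rabs (Fs x y) <= F.
Hypothesis Fa_lipschitz : lipschitz2 L Fa.
Hypothesis Fs_lipschitz : lipschitz2 L Fs.

Fixpoint picard (n : nat) (t : R) : R * R :=
  match n with
  | O => (a0, s0)
  | S n => (a0 + RInt (along Fa (picard n)) 0 t, s0 + RInt (along Fs (picard n)) 0 t)
  end.

Lemma picard_S_fst n t : fst (picard (S n) t) = a0 + RInt (along Fa (picard n)) 0 t.
Proof. reflexivity. Qed.

Lemma picard_S_snd n t : snd (picard (S n) t) = s0 + RInt (along Fs (picard n)) 0 t.
Proof. reflexivity. Qed.

Lemma F_nonneg : 0 <= F.
Proof. pose proof (Rabs_pos (Fa 0 0)). pose proof (Fa_bounded 0 0). lra. Qed.

Lemma picard_lipschitz n : lipschitz_path F (picard n).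
Proof.
  pose proof F_nonneg as HF. induction n as [|n IH].
  - split; intros s t; simpl; rewrite Rminus_eq_0, Rabs_R0; pose proof (Rabs_pos (s - t)); nra.
  - split; [exact (integral_map_lipschitz L F F Fa _ a0 ltac:(lra) Fa_lipschitz Fa_bounded IH)
           |exact (integral_map_lipschitz L F F Fs _ s0 ltac:(lra) Fs_lipschitz Fs_bounded IH)].
Qed.

Lemma picard_ex_RInt G n a b : lipschitz2 L G -> ex_RInt (along G (picard n)) a b.
Proof. intros HG. exact (along_ex_RInt L F G _ a b ltac:(lra) HG (picard_lipschitz n)). Qed.

(* The weight [exp (4 L t)] absorbs the Lipschitz constant, so that each Picard step halves the weighted distance. *)
Definition envelope (t : R) : R := F / (2 * L) * exp (4 * L * t).

Lemma envelope_le u t : u <= t -> envelope u <= envelope t.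
Proof.
  intros Hut. pose proof F_nonneg. unfold envelope.
  apply Rmult_le_compat_l; [apply Rle_mult_inv_pos; lra|].
  destruct (Rle_lt_or_eq _ _ Hut) as [Hlt | ->]; [left; apply exp_increasing; nra | lra].
Qed.

Lemma picard_step_le n t : 0 <= t -> dist2 (picard (S n) t) (picard n t) <= envelope t * (/ 2) ^ n.
Proof.
  revert t. induction n as [|n IH]; intros t Ht.
  - unfold dist2. rewrite picard_S_fst, picard_S_snd, !Rplus_minus_l. simpl fst; simpl snd.
    assert (Hc : forall G, lipschitz2 L G -> (forall x y, Rabs (G x y) <= F) ->
                 Rabs (RInt (along G (picard 0)) 0 t) <= t * F).
    { intros G HG HGF. rewrite <- (Rminus_0_r t) at 2.
      apply abs_RInt_le_const; [lra | apply picard_ex_RInt, HG | intros; apply HGF]. }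
    pose proof (Hc Fa Fa_lipschitz Fa_bounded). pose proof (Hc Fs Fs_lipschitz Fs_bounded).
    pose proof (exp_ineq1_le (4 * L * t)). pose proof F_nonneg.
    assert (F / (2 * L) * (1 + 4 * L * t) <= envelope t).
    { apply Rmult_le_compat_l; [apply Rle_mult_inv_pos|]; lra. }
    assert (F / (2 * L) * (1 + 4 * L * t) = F / (2 * L) + 2 * F * t) by (field; lra).
    assert (0 <= F / (2 * L)) by (apply Rle_mult_inv_pos; lra).
    rewrite pow_O, Rmult_1_r. lra.
  - assert (Hc : forall G, lipschitz2 L G ->
                 Rabs (RInt (along G (picard (S n))) 0 t - RInt (along G (picard n)) 0 t)
                 <= envelope t * (/ 2) ^ n / 4).
    { intros G HG. eapply Rle_trans.
      - apply (RInt_diff_le _ _ (fun u => L * (F / (2 * L) * (/ 2) ^ n) * exp (4 * L * u)));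
          [lra | apply picard_ex_RInt, HG | apply picard_ex_RInt, HG | |].
        + apply (ex_RInt_continuous (V := R_CompleteNormedModule)). intros z _.
          apply (ex_derive_continuous (fun u => L * (F / (2 * L) * (/ 2) ^ n) * exp (4 * L * u))).
          auto_derive. exact I.
        + intros u Hu. eapply Rle_trans; [apply along_diff_le, HG|].
          rewrite Rmult_assoc. apply Rmult_le_compat_l; [lra|].
          replace (F / (2 * L) * (/ 2) ^ n * exp (4 * L * u)) with (envelope u * (/ 2) ^ n)
            by (unfold envelope; ring).
          apply IH. lra.
      - rewrite RInt_exp_scaled by lra. unfold envelope.
        pose proof (pow_le (/ 2) n ltac:(lra)). pose proof F_nonneg.
        assert (0 <= F / (2 * L) * (/ 2) ^ n) by (apply Rmult_le_pos; [apply Rle_mult_inv_pos|]; lra).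
        replace (L * (F / (2 * L) * (/ 2) ^ n) * (exp (4 * L * t) - 1) / (4 * L))
          with (F / (2 * L) * (/ 2) ^ n * (exp (4 * L * t) - 1) / 4) by (field; lra).
        assert (0 < exp (4 * L * t)) by apply exp_pos. nra. }
    unfold dist2. rewrite !picard_S_fst, !picard_S_snd, !Rminus_plus_l_l.
    pose proof (Hc Fa Fa_lipschitz). pose proof (Hc Fs Fs_lipschitz). simpl pow. lra.
Qed.

Lemma picard_converges s : 0 <= s ->
  exists p : R * R, is_lim_seq (fun n => fst (picard n s)) (fst p) /\
    is_lim_seq (fun n => snd (picard n s)) (snd p) /\
    forall n, dist2 (picard n s) p <= 4 * envelope s * (/ 2) ^ n.
Proof.
  intros Hs.
  assert (Hstep := fun n => picard_step_le n s Hs). unfold dist2 in Hstep.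
  assert (H1 : forall n, Rabs (fst (picard (S n) s) - fst (picard n s)) <= envelope s * (/ 2) ^ n)
    by (intros n; pose proof (Hstep n); pose proof (Rabs_pos (snd (picard (S n) s) - snd (picard n s))); lra).
  assert (H2 : forall n, Rabs (snd (picard (S n) s) - snd (picard n s)) <= envelope s * (/ 2) ^ n)
    by (intros n; pose proof (Hstep n); pose proof (Rabs_pos (fst (picard (S n) s) - fst (picard n s))); lra).
  destruct (half_pow_cauchy _ _ H1) as [l1 [Hl1 Ht1]].
  destruct (half_pow_cauchy _ _ H2) as [l2 [Hl2 Ht2]].
  exists (l1, l2). split; [exact Hl1|split; [exact Hl2|]].
  intros n. unfold dist2. simpl. pose proof (Ht1 n). pose proof (Ht2 n). lra.
Qed.

(* Clamping the time at [0] makes the limit Lipschitz on the whole line. *)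
Definition picard_lim (t : R) : R * R :=
  (real (Lim_seq (fun n => fst (picard n (Rmax 0 t)))),
   real (Lim_seq (fun n => snd (picard n (Rmax 0 t))))).

Lemma picard_lim_spec t : 0 <= t ->
  is_lim_seq (fun n => fst (picard n t)) (fst (picard_lim t)) /\
  is_lim_seq (fun n => snd (picard n t)) (snd (picard_lim t)) /\
  forall n, dist2 (picard n t) (picard_lim t) <= 4 * envelope t * (/ 2) ^ n.
Proof.
  intros Ht. destruct (picard_converges t Ht) as [[l1 l2] [H1 [H2 H3]]].
  unfold picard_lim. rewrite Rmax_right by exact Ht.
  rewrite (is_lim_seq_unique _ _ H1), (is_lim_seq_unique _ _ H2). simpl. auto.
Qed.

Lemma picard_lim_lipschitz : lipschitz_path F picard_lim.
Proof.
  assert (Hcv := fun t => picard_lim_spec (Rmax 0 t) (Rmax_l 0 t)).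
  assert (Hid : forall t, picard_lim (Rmax 0 t) = picard_lim t)
    by (intros t; unfold picard_lim; rewrite (Rmax_right 0 (Rmax 0 t)) by apply Rmax_l; reflexivity).
  pose proof F_nonneg.
  split.
  - apply (lipschitz_with_lim F (fun n t => fst (picard n (Rmax 0 t)))).
    + intros n. apply (lipschitz_with_Rmax0 F (fun t => fst (picard n t))); [lra | apply picard_lipschitz].
    + intros t. rewrite <- Hid. apply Hcv.
  - apply (lipschitz_with_lim F (fun n t => snd (picard n (Rmax 0 t)))).
    + intros n. apply (lipschitz_with_Rmax0 F (fun t => snd (picard n t))); [lra | apply picard_lipschitz].
    + intros t. rewrite <- Hid. apply Hcv.
Qed.

Lemma picard_lim_fixpoint (pr : R * R -> R) G c t :
  lipschitz2 L G -> 0 <= t ->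
  (forall n, pr (picard (S n) t) = c + RInt (along G (picard n)) 0 t) ->
  is_lim_seq (fun n => pr (picard n t)) (pr (picard_lim t)) ->
  pr (picard_lim t) = c + RInt (along G picard_lim) 0 t.
Proof.
  intros HG Ht Hpr Hlim.
  apply is_lim_seq_incr_1 in Hlim.
  assert (Hint : is_lim_seq (fun n => pr (picard (S n) t)) (c + RInt (along G picard_lim) 0 t)).
  { apply (is_lim_seq_half_pow_bound _ _ (L * (t * (4 * envelope t)))). intros n.
    rewrite Hpr, Rminus_plus_l_l. eapply Rle_trans.
    - apply (RInt_diff_le _ _ (fun _ => L * (4 * envelope t * (/ 2) ^ n)));
        [exact Ht | apply picard_ex_RInt, HG
        | exact (along_ex_RInt L F G _ 0 t ltac:(lra) HG picard_lim_lipschitz) | apply ex_RInt_const |].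
      intros u Hu. eapply Rle_trans; [apply along_diff_le, HG|]. apply Rmult_le_compat_l; [lra|].
      destruct (picard_lim_spec u ltac:(lra)) as [_ [_ Hd]]. eapply Rle_trans; [apply Hd|].
      pose proof (envelope_le u t ltac:(lra)). pose proof (pow_le (/ 2) n ltac:(lra)). nra.
    - rewrite RInt_const. change (scal (t - 0) ?x) with ((t - 0) * x). rewrite Rminus_0_r.
      right. ring. }
  apply is_lim_seq_unique in Hlim. apply is_lim_seq_unique in Hint.
  rewrite Hlim in Hint. injection Hint. auto.
Qed.

Lemma picard_solution : exists Ya Ys : R -> R,
  Ya 0 = a0 /\ Ys 0 = s0 /\ lipschitz_with F Ya /\ lipschitz_with F Ys /\
  forall t, 0 < t -> is_derive Ya t (Fa (Ya t) (Ys t)) /\ is_derive Ys t (Fs (Ya t) (Ys t)).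
Proof.
  assert (Heq : forall t, 0 <= t ->
    fst (picard_lim t) = a0 + RInt (along Fa picard_lim) 0 t /\
    snd (picard_lim t) = s0 + RInt (along Fs picard_lim) 0 t).
  { intros t Ht. destruct (picard_lim_spec t Ht) as [H1 [H2 _]].
    split; [exact (picard_lim_fixpoint fst Fa a0 t Fa_lipschitz Ht (fun n => picard_S_fst n t) H1)
           |exact (picard_lim_fixpoint snd Fs s0 t Fs_lipschitz Ht (fun n => picard_S_snd n t) H2)]. }
  destruct picard_lim_lipschitz as [Hla Hls].
  exists (fun t => fst (picard_lim t)), (fun t => snd (picard_lim t)).
  destruct (Heq 0 (Rle_refl 0)) as [E1 E2]. rewrite RInt_point in E1, E2. change zero with 0 in E1, E2. rewrite Rplus_0_r in E1, E2.
  split; [exact E1|split; [exact E2|split; [exact Hla|split; [exact Hls|]]]].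
  intros t Ht. split.
  - apply (is_derive_RInt_0 _ (along Fa picard_lim) a0 (2 * L * F)); [|exact Ht|apply Heq].
    apply along_lipschitz; [lra | exact Fa_lipschitz | exact picard_lim_lipschitz].
  - apply (is_derive_RInt_0 _ (along Fs picard_lim) s0 (2 * L * F)); [|exact Ht|apply Heq].
    apply along_lipschitz; [lra | exact Fs_lipschitz | exact picard_lim_lipschitz].
Qed.

End Picard.

(** * Elementary estimates for the model *)

Lemma Rabs_scale_le c X Y : 0 <= c -> Rabs X <= Y -> Rabs (c * X) <= c * Y.
Proof. intros Hc HX. rewrite Rabs_mult, Rabs_pos_eq by exact Hc. apply Rmult_le_compat_l; assumption. Qed.

Lemma abs_cube_mul_lipschitz_on K x y : Rabs x <= K -> Rabs y <= K ->
  Rabs (Rabs x ^ 3 * x - Rabs y ^ 3 * y) <= 4 * K ^ 3 * Rabs (x - y).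
Proof.
  intros Hx Hy. set (a := Rabs x) in *. set (b := Rabs y) in *.
  assert (Ha : 0 <= a) by apply Rabs_pos. assert (Hb : 0 <= b) by apply Rabs_pos.
  assert (Hab : Rabs (a - b) <= Rabs (x - y)) by apply Rabs_triang_inv2.
  assert (Hd : 0 <= Rabs (x - y)) by apply Rabs_pos.
  replace (a ^ 3 * x - b ^ 3 * y) with (a ^ 3 * (x - y) + (a - b) * ((a ^ 2 + a * b + b ^ 2) * y)) by ring.
  eapply Rle_trans; [apply Rabs_triang|]. rewrite !Rabs_mult.
  rewrite (Rabs_right (a ^ 3)) by (apply Rle_ge, pow_le, Ha).
  rewrite (Rabs_right (a ^ 2 + a * b + b ^ 2)) by (apply Rle_ge; nra).
  fold b. assert (a ^ 3 <= K ^ 3) by (apply pow_incr; lra).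
  assert (a ^ 2 + a * b + b ^ 2 <= 3 * K ^ 2) by nra.
  assert ((a ^ 2 + a * b + b ^ 2) * b <= 3 * K ^ 2 * K) by (apply Rmult_le_compat; nra).
  assert (Rabs (a - b) * ((a ^ 2 + a * b + b ^ 2) * b) <= Rabs (x - y) * (3 * K ^ 2 * K))
    by (apply Rmult_le_compat; try apply Rabs_pos; nra).
  assert (a ^ 3 * Rabs (x - y) <= K ^ 3 * Rabs (x - y)) by (apply Rmult_le_compat_r; lra).
  replace (K ^ 3) with (K ^ 2 * K) in * by ring. lra.
Qed.

Lemma linear_minus_quartic_large B k x : 0 <= B -> 0 < k -> 1 + B / k <= x ->
  B * x - k * x ^ 4 <= - k * x.
Proof.
  intros HB Hk Hx. assert (HBk : 0 <= B / k) by (apply Rle_mult_inv_pos; lra).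
  assert (Hx3 : x <= x ^ 3) by (replace (x ^ 3) with (x * (x * x)) by ring; nra).
  assert (k * (1 + B / k) = k + B) by (field; lra).
  assert (k + B <= k * x ^ 3) by nra.
  replace (x ^ 4) with (x ^ 3 * x) by ring. nra.
Qed.

Lemma linear_minus_quartic_le B k x : 0 <= B -> 0 < k -> 0 <= x ->
  B * x - k * x ^ 4 <= B * (1 + B / k).
Proof.
  intros HB Hk Hx. assert (HBk : 0 <= B / k) by (apply Rle_mult_inv_pos; lra).
  destruct (Rle_or_lt (1 + B / k) x) as [Hl | Hl].
  - pose proof (linear_minus_quartic_large B k x HB Hk Hl). nra.
  - pose proof (pow_le x 4 Hx). nra.
Qed.

Definition quartic_threshold (A B k : R) : R := 1 + B / k + (A + B * (1 + B / k)) / k.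

Lemma quartic_sum_nonpos A B k x y :
  0 <= A -> 0 <= B -> 0 < k -> 0 <= y -> quartic_threshold A B k <= x ->
  A + B * (x + y) - k * (x ^ 4 + y ^ 4) <= 0.
Proof.
  intros HA HB Hk Hy Hx. unfold quartic_threshold in Hx.
  assert (HBk : 0 <= B / k) by (apply Rle_mult_inv_pos; lra).
  assert (H0 : 0 <= (A + B * (1 + B / k)) / k) by (apply Rle_mult_inv_pos; nra).
  pose proof (linear_minus_quartic_large B k x HB Hk ltac:(lra)).
  pose proof (linear_minus_quartic_le B k y HB Hk Hy).
  assert (k * ((A + B * (1 + B / k)) / k) = A + B * (1 + B / k)) by (field; lra).
  nra.
Qed.

Lemma quartic_threshold_ge1 A B k : 0 <= A -> 0 <= B -> 0 < k -> 1 <= quartic_threshold A B k.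
Proof.
  intros HA HB Hk. unfold quartic_threshold.
  assert (0 <= B / k) by (apply Rle_mult_inv_pos; lra).
  assert (0 <= (A + B * (1 + B / k)) / k) by (apply Rle_mult_inv_pos; nra). lra.
Qed.

Definition clamp (M x : R) : R := Rmin M (Rmax 0 x).

Lemma clamp_range M x : 0 <= M -> 0 <= clamp M x <= M.
Proof. intros. unfold clamp, Rmin, Rmax. repeat destruct Rle_dec; lra. Qed.

Lemma clamp_lipschitz M x y : Rabs (clamp M x - clamp M y) <= Rabs (x - y).
Proof. unfold clamp, Rmin, Rmax. repeat destruct Rle_dec; unfold Rabs; repeat destruct Rcase_abs; lra. Qed.

Lemma clamp_id M x : 0 <= x <= M -> clamp M x = x.
Proof. intros. unfold clamp, Rmin, Rmax. repeat destruct Rle_dec; lra. Qed.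

Lemma clamp_nonpos M x : 0 <= M -> x <= 0 -> clamp M x = 0.
Proof. intros. unfold clamp, Rmin, Rmax. repeat destruct Rle_dec; lra. Qed.

Lemma clamp_nonneg M x : 0 <= x -> clamp M x = Rmin M x.
Proof. intros. unfold clamp. rewrite Rmax_right; auto. Qed.

Definition lipschitz2_on (K L : R) (G : R -> R -> R) : Prop :=
  forall x y x' y', Rabs x <= K -> Rabs y <= K -> Rabs x' <= K -> Rabs y' <= K ->
    Rabs (G x y - G x' y') <= L * (Rabs (x - x') + Rabs (y - y')).

Lemma clamp_abs_le M x : 0 <= M -> Rabs (clamp M x) <= M.
Proof. intros HM. destruct (clamp_range M x HM). rewrite Rabs_right; lra. Qed.

Lemma lipschitz2_on_div K L g G : 0 < g -> lipschitz2_on K L G -> lipschitz2_on K (L / g) (fun x y => G x y / g).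
Proof.
  intros Hg HG x y x' y' Hx Hy Hx' Hy'.
  replace (G x y / g - G x' y' / g) with ((G x y - G x' y') * / g) by (field; lra).
  rewrite Rabs_mult, (Rabs_right (/ g)) by (apply Rle_ge, Rlt_le, Rinv_0_lt_compat, Hg).
  apply (Rle_trans _ (L * (Rabs (x - x') + Rabs (y - y')) * / g)); [|right; unfold Rdiv; ring].
  apply Rmult_le_compat_r; [left; apply Rinv_0_lt_compat, Hg | apply HG; assumption].
Qed.

Lemma clamped_lipschitz2 M L G : 0 <= M -> 0 <= L -> lipschitz2_on M L G ->
  lipschitz2 L (fun x y => G (clamp M x) (clamp M y)).
Proof.
  intros HM HL HG x y x' y'.
  eapply Rle_trans; [apply HG; apply clamp_abs_le, HM | apply Rmult_le_compat_l; [exact HL|]].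
  pose proof (clamp_lipschitz M x x'). pose proof (clamp_lipschitz M y y'). lra.
Qed.

Lemma clamped_bounded M L G x y : 0 <= M -> 0 <= L -> lipschitz2_on M L G ->
  Rabs (G (clamp M x) (clamp M y)) <= Rabs (G 0 0) + 2 * L * M.
Proof.
  intros HM HL HG.
  assert (H0 : Rabs 0 <= M) by (rewrite Rabs_R0; exact HM).
  pose proof (HG _ _ 0 0 (clamp_abs_le M x HM) (clamp_abs_le M y HM) H0 H0) as Hd.
  rewrite !Rminus_0_r in Hd.
  pose proof (clamp_abs_le M x HM). pose proof (clamp_abs_le M y HM).
  pose proof (Rabs_triang_inv (G (clamp M x) (clamp M y)) (G 0 0)). nra.
Qed.

Lemma is_derive_lincomb (f g : R -> R) a b c t df dg :
  is_derive f t df -> is_derive g t dg ->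
  is_derive (fun s => a * f s + b * g s - c) t (a * df + b * dg).
Proof.
  intros Hf Hg. auto_derive.
  - repeat split; [exists df; exact Hf | exists dg; exact Hg].
  - replace (Derive (fun x => f x) t) with df by (symmetry; apply is_derive_unique, Hf).
    replace (Derive (fun x => g x) t) with dg by (symmetry; apply is_derive_unique, Hg). ring.
Qed.

Lemma is_derive_weighted_sqr_dist (f1 f2 g1 g2 : R -> R) C t df1 df2 dg1 dg2 :
  is_derive f1 t df1 -> is_derive f2 t df2 -> is_derive g1 t dg1 -> is_derive g2 t dg2 ->
  is_derive (fun s => ((f1 s - f2 s) ^ 2 + (g1 s - g2 s) ^ 2) * exp (- C * s)) t
    ((2 * (f1 t - f2 t) * (df1 - df2) + 2 * (g1 t - g2 t) * (dg1 - dg2)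
      - C * ((f1 t - f2 t) ^ 2 + (g1 t - g2 t) ^ 2)) * exp (- C * t)).
Proof.
  intros H1 H2 H3 H4. auto_derive.
  - repeat split; [exists df1 | exists df2 | exists dg1 | exists dg2]; assumption.
  - replace (Derive (fun x => f1 x) t) with df1 by (symmetry; apply is_derive_unique, H1).
    replace (Derive (fun x => f2 x) t) with df2 by (symmetry; apply is_derive_unique, H2).
    replace (Derive (fun x => g1 x) t) with dg1 by (symmetry; apply is_derive_unique, H3).
    replace (Derive (fun x => g2 x) t) with dg2 by (symmetry; apply is_derive_unique, H4). ring.
Qed.

Lemma gronwall_quadratic a b fa fs L : 0 <= L ->
  Rabs fa <= L * (Rabs a + Rabs b) -> Rabs fs <= L * (Rabs a + Rabs b) ->
  2 * a * fa + 2 * b * fs <= 4 * L * (a ^ 2 + b ^ 2).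
Proof.
  intros HL Ha Hb.
  assert (a * fa <= Rabs a * (L * (Rabs a + Rabs b))).
  { eapply Rle_trans; [apply Rle_abs|]. rewrite Rabs_mult. apply Rmult_le_compat_l; [apply Rabs_pos | exact Ha]. }
  assert (b * fs <= Rabs b * (L * (Rabs a + Rabs b))).
  { eapply Rle_trans; [apply Rle_abs|]. rewrite Rabs_mult. apply Rmult_le_compat_l; [apply Rabs_pos | exact Hb]. }
  rewrite <- (pow2_abs a), <- (pow2_abs b).
  assert (0 <= L * (Rabs a - Rabs b) ^ 2) by (apply Rmult_le_pos; [exact HL | apply pow2_ge_0]).
  nra.
Qed.

Lemma sqr_sum_nonpos a b : a ^ 2 + b ^ 2 <= 0 -> a = 0 /\ b = 0.
Proof.
  intros H. pose proof (pow2_ge_0 a). pose proof (pow2_ge_0 b).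
  split; apply Rsqr_0_uniq; unfold Rsqr; simpl in *; lra.
Qed.

(** * The radiative system *)

Section Model.

Variables (ga gs lam q sigB eps La Ls : R) (beta_a beta_s : R -> R).
Hypothesis ga_pos : 0 < ga.
Hypothesis gs_pos : 0 < gs.
Hypothesis lam_nonneg : 0 <= lam.
Hypothesis q_pos : 0 < q.
Hypothesis sigB_pos : 0 < sigB.
Hypothesis eps_range : 0 < eps < 2.
Hypothesis La_nonneg : 0 <= La.
Hypothesis Ls_nonneg : 0 <= Ls.
Hypothesis beta_a_lip : lipschitz_with La beta_a.
Hypothesis beta_s_lip : lipschitz_with Ls beta_s.
Hypothesis beta_a_nonneg : forall x, 0 <= beta_a x.
Hypothesis beta_s_pos : forall x, 0 < beta_s x.

Local Notation Fa := (rhs_a lam eps sigB q beta_a).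
Local Notation Fs := (rhs_s lam eps sigB q beta_s).

Definition rhs_lip_const (K : R) : R := lam + 16 * sigB * K ^ 3 + q * (La + Ls).

Lemma rhs_lip_const_nonneg K : 0 <= K -> 0 <= rhs_lip_const K.
Proof.
  intros HK. unfold rhs_lip_const. pose proof (pow_le K 3 HK).
  assert (0 <= sigB * K ^ 3) by nra. assert (0 <= q * (La + Ls)) by nra. lra.
Qed.

Lemma rhs_a_lipschitz_on K : 0 <= K -> lipschitz2_on K (rhs_lip_const K) Fa.
Proof.
  intros HK x y x' y' Hx Hy Hx' Hy'. unfold rhs_a, rhs_lip_const.
  set (dx := Rabs (x - x')). set (dy := Rabs (y - y')).
  assert (Hdx : 0 <= dx) by apply Rabs_pos. assert (Hdy : 0 <= dy) by apply Rabs_pos.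
  assert (HK3 : 0 <= sigB * K ^ 3) by (pose proof (pow_le K 3 HK); nra).
  assert (T1 : Rabs (lam * ((y - y') - (x - x'))) <= lam * (dx + dy)).
  { apply Rabs_scale_le; [exact lam_nonneg|]. eapply Rle_trans; [apply Rabs_triang|].
    rewrite Rabs_Ropp. unfold dx, dy. lra. }
  assert (T2 : Rabs (eps * sigB * (Rabs y ^ 3 * y - Rabs y' ^ 3 * y')) <= eps * sigB * (4 * K ^ 3 * dy))
    by (apply Rabs_scale_le; [nra | apply abs_cube_mul_lipschitz_on; assumption]).
  assert (T3 : Rabs (2 * eps * sigB * (Rabs x ^ 3 * x - Rabs x' ^ 3 * x')) <= 2 * eps * sigB * (4 * K ^ 3 * dx))
    by (apply Rabs_scale_le; [nra | apply abs_cube_mul_lipschitz_on; assumption]).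
  assert (T4 : Rabs (q * (beta_a x - beta_a x')) <= q * (La * dx))
    by (apply Rabs_scale_le; [lra | apply beta_a_lip]).
  apply Rabs_le_between in T1, T2, T3, T4.
  assert (0 <= (2 - eps) * (sigB * K ^ 3 * dx)) by (apply Rmult_le_pos; nra).
  assert (0 <= (2 - eps) * (sigB * K ^ 3 * dy)) by (apply Rmult_le_pos; nra).
  assert (0 <= q * La * dy /\ 0 <= q * Ls * dx /\ 0 <= q * Ls * dy) by (repeat split; apply Rmult_le_pos; nra).
  apply Rabs_le. lra.
Qed.

Lemma rhs_s_lipschitz_on K : 0 <= K -> lipschitz2_on K (rhs_lip_const K) Fs.
Proof.
  intros HK x y x' y' Hx Hy Hx' Hy'. unfold rhs_s, rhs_lip_const.
  set (dx := Rabs (x - x')). set (dy := Rabs (y - y')).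
  assert (Hdx : 0 <= dx) by apply Rabs_pos. assert (Hdy : 0 <= dy) by apply Rabs_pos.
  assert (HK3 : 0 <= sigB * K ^ 3) by (pose proof (pow_le K 3 HK); nra).
  assert (T1 : Rabs (lam * ((x - x') - (y - y'))) <= lam * (dx + dy)).
  { apply Rabs_scale_le; [exact lam_nonneg|]. eapply Rle_trans; [apply Rabs_triang|].
    rewrite Rabs_Ropp. unfold dx, dy. lra. }
  assert (T2 : Rabs (sigB * (Rabs y ^ 3 * y - Rabs y' ^ 3 * y')) <= sigB * (4 * K ^ 3 * dy))
    by (apply Rabs_scale_le; [lra | apply abs_cube_mul_lipschitz_on; assumption]).
  assert (T3 : Rabs (eps * sigB * (Rabs x ^ 3 * x - Rabs x' ^ 3 * x')) <= eps * sigB * (4 * K ^ 3 * dx))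
    by (apply Rabs_scale_le; [nra | apply abs_cube_mul_lipschitz_on; assumption]).
  assert (T4 : Rabs (q * (beta_s y - beta_s y')) <= q * (Ls * dy))
    by (apply Rabs_scale_le; [lra | apply beta_s_lip]).
  apply Rabs_le_between in T1, T2, T3, T4.
  assert (0 <= (2 - eps) * (sigB * K ^ 3 * dx)) by (apply Rmult_le_pos; nra).
  assert (0 <= sigB * K ^ 3 * dx /\ 0 <= sigB * K ^ 3 * dy) by (split; apply Rmult_le_pos; lra).
  assert (0 <= q * La * dx /\ 0 <= q * La * dy /\ 0 <= q * Ls * dx) by (repeat split; apply Rmult_le_pos; nra).
  apply Rabs_le. lra.
Qed.

Lemma rhs_a_zero_ge v : 0 <= v -> eps * sigB * v ^ 4 <= Fa 0 v.
Proof.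
  intros Hv. unfold rhs_a. rewrite Rabs_R0, (Rabs_pos_eq v Hv).
  pose proof (beta_a_nonneg 0). assert (0 <= lam * v) by nra. assert (0 <= q * beta_a 0) by nra. lra.
Qed.

Lemma rhs_s_zero_pos u : 0 <= u -> 0 < Fs u 0.
Proof.
  intros Hu. unfold rhs_s. rewrite Rabs_R0, (Rabs_pos_eq u Hu).
  pose proof (beta_s_pos 0). pose proof (pow_le u 4 Hu).
  assert (0 <= lam * u) by nra. assert (0 < q * beta_s 0) by nra. assert (0 <= eps * sigB * u ^ 4) by (repeat apply Rmult_le_pos; lra). lra.
Qed.

Definition energy_weight : R := (2 + eps) / 2.
Definition dissipation : R := (2 - eps) * eps * sigB / 4.
Definition forcing_lin : R := lam * eps / 2 + q * La + energy_weight * q * Ls.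
Definition forcing_const : R := q * (beta_a 0 + energy_weight * beta_s 0).

Lemma energy_constants :
  1 < energy_weight /\ 0 < dissipation /\ 0 <= forcing_lin /\ 0 <= forcing_const.
Proof.
  unfold forcing_lin, forcing_const, energy_weight, dissipation.
  pose proof (beta_a_nonneg 0). pose proof (beta_s_pos 0).
  repeat split; [lra | | | ].
  - assert (0 < (2 - eps) * eps) by nra. unfold Rdiv. apply Rmult_lt_0_compat; [nra | lra].
  - assert (0 <= lam * eps) by nra. assert (0 <= q * La) by nra.
    assert (0 <= (2 + eps) / 2 * q * Ls) by (apply Rmult_le_pos; [apply Rmult_le_pos|]; lra). lra.
  - apply Rmult_le_pos; [lra|]. apply Rplus_le_le_0_compat; [lra|]. apply Rmult_le_pos; lra.
Qed.

(* The weight [energy_weight] makes the coefficients of [Ta^4] and [Ts^4] both negative. *)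
Lemma rhs_energy_le u v : 0 <= u -> 0 <= v ->
  Fa u v + energy_weight * Fs u v <=
  forcing_const + forcing_lin * (u + v) - dissipation * (u ^ 4 + v ^ 4).
Proof.
  intros Hu Hv. unfold rhs_a, rhs_s, forcing_lin, forcing_const, energy_weight, dissipation.
  rewrite (Rabs_pos_eq u Hu), (Rabs_pos_eq v Hv).
  assert (Ha : beta_a u <= beta_a 0 + La * u).
  { pose proof (beta_a_lip u 0) as H. rewrite Rminus_0_r, (Rabs_pos_eq u Hu) in H.
    apply Rabs_le_between in H. lra. }
  assert (Hs : beta_s v <= beta_s 0 + Ls * v).
  { pose proof (beta_s_lip v 0) as H. rewrite Rminus_0_r, (Rabs_pos_eq v Hv) in H.
    apply Rabs_le_between in H. lra. }
  assert (q * beta_a u <= q * (beta_a 0 + La * u)) by (apply Rmult_le_compat_l; lra).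
  assert ((2 + eps) / 2 * q * beta_s v <= (2 + eps) / 2 * q * (beta_s 0 + Ls * v))
    by (apply Rmult_le_compat_l; nra).
  pose proof (pow_le u 4 Hu). pose proof (pow_le v 4 Hv).
  assert (0 <= (2 - eps) * eps * sigB * u ^ 4) by (repeat apply Rmult_le_pos; lra).
  assert (0 <= (2 - eps) * (2 - eps) * sigB * v ^ 4) by (repeat apply Rmult_le_pos; lra).
  assert (0 <= lam * eps * v) by (repeat apply Rmult_le_pos; lra).
  assert (0 <= q * La * v) by (repeat apply Rmult_le_pos; lra).
  assert (0 <= (2 + eps) / 2 * q * Ls * u) by (apply Rmult_le_pos; [apply Rmult_le_pos; [apply Rmult_le_pos|]|]; lra).
  lra.
Qed.

Variables Ta0 Ts0 : R.
Hypothesis Ta0_nonneg : 0 <= Ta0.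
Hypothesis Ts0_nonneg : 0 <= Ts0.

Definition threshold : R := quartic_threshold forcing_const forcing_lin dissipation.

Definition energy_level : R :=
  ga * Ta0 + energy_weight * gs * Ts0 + (ga + energy_weight * gs) * threshold.

Definition trunc_bound : R := threshold + energy_level / ga + energy_level / (energy_weight * gs).

Lemma trunc_constants :
  1 <= threshold /\ (ga + energy_weight * gs) * threshold <= energy_level /\
  threshold <= trunc_bound /\ energy_level / ga <= trunc_bound /\
  energy_level / (energy_weight * gs) <= trunc_bound.
Proof.
  destruct energy_constants as [Hw [Hk [HB HA]]].
  assert (Hth : 1 <= threshold) by (apply quartic_threshold_ge1; assumption).
  assert (HV : (ga + energy_weight * gs) * threshold <= energy_level).
  { unfold energy_level. assert (0 <= ga * Ta0) by nra.
    assert (0 <= energy_weight * gs * Ts0) by (apply Rmult_le_pos; [apply Rmult_le_pos|]; lra). lra. }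
  assert (Hwgs : 0 < energy_weight * gs) by (apply Rmult_lt_0_compat; lra).
  assert (0 <= (ga + energy_weight * gs) * threshold) by (apply Rmult_le_pos; lra).
  assert (0 <= energy_level / ga) by (apply Rle_mult_inv_pos; lra).
  assert (0 <= energy_level / (energy_weight * gs)) by (apply Rle_mult_inv_pos; lra).
  unfold trunc_bound. repeat split; lra.
Qed.

(* Above [energy_level] one of the temperatures exceeds [threshold], where dissipation dominates. *)
Lemma level_exceeded_large x y : energy_level < ga * x + energy_weight * gs * y ->
  threshold <= Rmin trunc_bound x \/ threshold <= Rmin trunc_bound y.
Proof.
  intros Hxy. destruct energy_constants as [Hw _]. destruct trunc_constants as [Hth [HV [HM _]]].
  destruct (Rle_or_lt threshold x) as [Hx | Hx]; [left; apply Rmin_glb; lra|].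
  destruct (Rle_or_lt threshold y) as [Hy | Hy]; [right; apply Rmin_glb; lra|].
  exfalso. assert (ga * x < ga * threshold) by (apply Rmult_lt_compat_l; lra).
  assert (energy_weight * gs * y < energy_weight * gs * threshold) by (apply Rmult_lt_compat_l; nra).
  lra.
Qed.

Section Truncated.

Let M := trunc_bound.

Variables Ya Ys : R -> R.
Hypothesis Ya_0 : Ya 0 = Ta0.
Hypothesis Ys_0 : Ys 0 = Ts0.
Hypothesis Ya_rc : right_cont Ya 0.
Hypothesis Ys_rc : right_cont Ys 0.
Hypothesis Y_derive : forall t, 0 < t ->
  is_derive Ya t (Fa (clamp M (Ya t)) (clamp M (Ys t)) / ga) /\
  is_derive Ys t (Fs (clamp M (Ya t)) (clamp M (Ys t)) / gs).

Lemma truncated_nonneg t : 0 <= t -> 0 <= Ya t /\ 0 <= Ys t.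
Proof.
  intros Ht. destruct trunc_constants as [Hth [_ [HM _]]].
  assert (Hcl : forall x, 0 <= clamp M x) by (intros x; apply clamp_range; unfold M; lra).
  split; apply Ropp_le_cancel; rewrite Ropp_0.
  - apply (nonpos_barrier (fun s => - Ya s) (fun s => - (Fa (clamp M (Ya s)) (clamp M (Ys s)) / ga))
             (t + 1) (fun _ => True)); [lra | apply right_cont_opp, Ya_rc | | | | lra].
    + intros s Hs. exact (is_derive_opp Ya s _ (proj1 (Y_derive s ltac:(lra)))).
    + intros. apply filter_forall. trivial.
    + intros s _ Hs _. rewrite (clamp_nonpos M (Ya s)) by (unfold M; lra).
      pose proof (rhs_a_zero_ge _ (Hcl (Ys s))). pose proof (pow_le (clamp M (Ys s)) 4 (Hcl _)).
      assert (0 <= eps * sigB * clamp M (Ys s) ^ 4) by (apply Rmult_le_pos; [apply Rmult_le_pos|]; lra).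
      assert (0 <= Fa 0 (clamp M (Ys s)) / ga) by (apply Rle_mult_inv_pos; lra). lra.
  - apply (nonpos_barrier (fun s => - Ys s) (fun s => - (Fs (clamp M (Ya s)) (clamp M (Ys s)) / gs))
             (t + 1) (fun _ => True)); [lra | apply right_cont_opp, Ys_rc | | | | lra].
    + intros s Hs. exact (is_derive_opp Ys s _ (proj2 (Y_derive s ltac:(lra)))).
    + intros. apply filter_forall. trivial.
    + intros s _ Hs _. rewrite (clamp_nonpos M (Ys s)) by (unfold M; lra).
      pose proof (rhs_s_zero_pos _ (Hcl (Ya s))).
      assert (0 <= Fs (clamp M (Ya s)) 0 / gs) by (apply Rle_mult_inv_pos; lra). lra.
Qed.

Lemma truncated_energy_le t : 0 <= t -> ga * Ya t + energy_weight * gs * Ys t <= energy_level.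
Proof.
  intros Ht. destruct energy_constants as [Hw [Hk [HB HA]]].
  destruct trunc_constants as [Hth [_ [HM _]]].
  assert (Hg : ga * Ya t + energy_weight * gs * Ys t - energy_level <= 0); [|lra].
  apply (nonpos_barrier (fun s => ga * Ya s + energy_weight * gs * Ys s - energy_level)
           (fun s => ga * (Fa (clamp M (Ya s)) (clamp M (Ys s)) / ga)
                     + energy_weight * gs * (Fs (clamp M (Ya s)) (clamp M (Ys s)) / gs))
           (t + 1) (fun _ => True)); [ | | | | | lra].
  - rewrite Ya_0, Ys_0. unfold energy_level.
    assert (0 <= (ga + energy_weight * gs) * threshold) by (apply Rmult_le_pos; nra). lra.
  - apply right_cont_plus; [apply right_cont_plus|apply right_cont_const];
      apply right_cont_mult; (apply right_cont_const || assumption).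
  - intros s Hs. apply is_derive_lincomb; apply Y_derive; lra.
  - intros. apply filter_forall. trivial.
  - intros s Hs Hpos _. destruct (truncated_nonneg s ltac:(lra)) as [Ha0 Hs0].
    rewrite !clamp_nonneg by assumption.
    set (u := Rmin M (Ya s)). set (v := Rmin M (Ys s)).
    assert (Hu : 0 <= u) by (apply Rmin_glb; unfold M; lra).
    assert (Hv : 0 <= v) by (apply Rmin_glb; unfold M; lra).
    replace (ga * (Fa u v / ga) + energy_weight * gs * (Fs u v / gs))
      with (Fa u v + energy_weight * Fs u v) by (field; lra).
    eapply Rle_trans; [apply rhs_energy_le; assumption|].
    assert (Hlarge : threshold <= u \/ threshold <= v) by (apply level_exceeded_large; lra).
    destruct Hlarge as [Hl | Hl].
    + apply quartic_sum_nonpos; assumption.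
    + replace (u + v) with (v + u) by ring. replace (u ^ 4 + v ^ 4) with (v ^ 4 + u ^ 4) by ring.
      apply quartic_sum_nonpos; assumption.
Qed.

Lemma truncated_range t : 0 <= t -> 0 <= Ya t <= M /\ 0 <= Ys t <= M.
Proof.
  intros Ht. destruct energy_constants as [Hw _].
  destruct trunc_constants as [_ [_ [_ [Ha Hs]]]].
  destruct (truncated_nonneg t Ht) as [Ha0 Hs0]. pose proof (truncated_energy_le t Ht).
  assert (Ya t <= energy_level / ga).
  { apply (Rmult_le_reg_l ga); [exact ga_pos|]. replace (ga * (energy_level / ga)) with energy_level by (field; lra).
    assert (0 <= energy_weight * gs * Ys t) by (apply Rmult_le_pos; nra). lra. }
  assert (Ys t <= energy_level / (energy_weight * gs)).
  { apply (Rmult_le_reg_l (energy_weight * gs)); [nra|].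
    replace (energy_weight * gs * (energy_level / (energy_weight * gs))) with energy_level by (field; nra).
    assert (0 <= ga * Ya t) by nra. lra. }
  unfold M. lra.
Qed.

End Truncated.

Lemma global_solution : exists (Ya Ys : R -> R) (M : R),
  (forall T, solution_on ga gs lam eps sigB q beta_a beta_s Ta0 Ts0 T Ya Ys) /\
  (forall t, 0 <= t -> 0 <= Ya t <= M /\ 0 <= Ys t <= M).
Proof.
  set (M := trunc_bound). set (Lc := rhs_lip_const M).
  destruct trunc_constants as [Hth [_ [HM _]]].
  assert (HM0 : 0 <= M) by (unfold M; lra).
  assert (HLc : 0 <= Lc) by exact (rhs_lip_const_nonneg M HM0).
  assert (HLa : 0 <= Lc / ga) by (apply Rle_mult_inv_pos; lra).
  assert (HLs : 0 <= Lc / gs) by (apply Rle_mult_inv_pos; lra).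
  assert (Ha := lipschitz2_on_div M Lc ga Fa ga_pos (rhs_a_lipschitz_on M HM0)).
  assert (Hs := lipschitz2_on_div M Lc gs Fs gs_pos (rhs_s_lipschitz_on M HM0)).
  set (Fm := (Rabs (Fa 0 0 / ga) + 2 * (Lc / ga) * M) + (Rabs (Fs 0 0 / gs) + 2 * (Lc / gs) * M)).
  assert (HFa : forall x y, Rabs (Fa (clamp M x) (clamp M y) / ga) <= Fm).
  { intros x y. pose proof (clamped_bounded M _ _ x y HM0 HLs Hs). pose proof (Rabs_pos (Fs 0 0 / gs)).
    pose proof (clamped_bounded M _ _ x y HM0 HLa Ha). assert (0 <= Lc / gs * M) by nra. unfold Fm. lra. }
  assert (HFs : forall x y, Rabs (Fs (clamp M x) (clamp M y) / gs) <= Fm).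
  { intros x y. pose proof (clamped_bounded M _ _ x y HM0 HLa Ha). pose proof (Rabs_pos (Fa 0 0 / ga)).
    pose proof (clamped_bounded M _ _ x y HM0 HLs Hs). assert (0 <= Lc / ga * M) by nra. unfold Fm. lra. }
  set (L := Lc / ga + Lc / gs + 1).
  assert (HLFa : lipschitz2 L (fun x y => Fa (clamp M x) (clamp M y) / ga))
    by (apply (lipschitz2_le (Lc / ga)); [unfold L; lra | exact (clamped_lipschitz2 M _ _ HM0 HLa Ha)]).
  assert (HLFs : lipschitz2 L (fun x y => Fs (clamp M x) (clamp M y) / gs))
    by (apply (lipschitz2_le (Lc / gs)); [unfold L; lra | exact (clamped_lipschitz2 M _ _ HM0 HLs Hs)]).
  destruct (picard_solution _ _ Fm L Ta0 Ts0 ltac:(unfold L; lra) HFa HFs HLFa HLFs)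
    as [Ya [Ys [H0a [H0s [HLYa [HLYs Hd]]]]]].
  assert (Hrange := truncated_range Ya Ys H0a H0s
                      (continuous_right_cont _ _ (lipschitz_continuous _ _ 0 HLYa))
                      (continuous_right_cont _ _ (lipschitz_continuous _ _ 0 HLYs)) Hd).
  exists Ya, Ys, M. split; [|exact Hrange].
  intros T. split; [exact H0a|split; [exact H0s|split; [|split]]].
  - exact (continuous_right_cont _ _ (lipschitz_continuous _ _ 0 HLYa)).
  - exact (continuous_right_cont _ _ (lipschitz_continuous _ _ 0 HLYs)).
  - intros t Ht. destruct (Hrange t ltac:(lra)) as [Hra Hrs]. destruct (Hd t ltac:(lra)) as [Da Ds].
    cbv beta in Da, Ds. rewrite !clamp_id in Da, Ds by assumption. split; assumption.
Qed.

Lemma solution_right_cont T Ua Us t :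
  solution_on ga gs lam eps sigB q beta_a beta_s Ta0 Ts0 T Ua Us -> 0 <= t < T ->
  right_cont Ua t /\ right_cont Us t.
Proof.
  intros [_ [_ [Ha [Hs Hd]]]] Ht. destruct (Rle_lt_or_eq _ _ (proj1 Ht)) as [Hpos | <-]; [|split; assumption].
  destruct (Hd t (conj Hpos (proj2 Ht))) as [Da Ds].
  split; apply continuous_right_cont;
    [exact (ex_derive_continuous _ _ (ex_intro _ _ Da)) | exact (ex_derive_continuous _ _ (ex_intro _ _ Ds))].
Qed.

Lemma solution_locally_bounded T Ua Us s :
  solution_on ga gs lam eps sigB q beta_a beta_s Ta0 Ts0 T Ua Us -> 0 <= s < T ->
  at_right s (fun r => Rabs (Ua r) <= Rabs (Ua s) + 1 /\ Rabs (Us r) <= Rabs (Us s) + 1).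
Proof.
  intros HU Hs. destruct (solution_right_cont T Ua Us s HU Hs) as [Ra Rs].
  eapply filter_imp;
    [|exact (filter_and _ _ (right_cont_near _ _ 1 Ra Rlt_0_1) (right_cont_near _ _ 1 Rs Rlt_0_1))].
  intros r [Na Ns]. pose proof (Rabs_triang_inv (Ua r) (Ua s)). pose proof (Rabs_triang_inv (Us r) (Us s)).
  split; lra.
Qed.

Lemma rhs_inner_diff_le K x y x' y' :
  0 <= K -> Rabs x <= K -> Rabs y <= K -> Rabs x' <= K -> Rabs y' <= K ->
  2 * (x - x') * (Fa x y / ga - Fa x' y' / ga) + 2 * (y - y') * (Fs x y / gs - Fs x' y' / gs)
  <= 4 * (rhs_lip_const K / ga + rhs_lip_const K / gs) * ((x - x') ^ 2 + (y - y') ^ 2).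
Proof.
  intros HK Hx Hy Hx' Hy'.
  assert (HLa : 0 <= rhs_lip_const K / ga) by (apply Rle_mult_inv_pos; [apply rhs_lip_const_nonneg|]; lra).
  assert (HLs : 0 <= rhs_lip_const K / gs) by (apply Rle_mult_inv_pos; [apply rhs_lip_const_nonneg|]; lra).
  pose proof (lipschitz2_on_div K _ ga Fa ga_pos (rhs_a_lipschitz_on K HK) x y x' y' Hx Hy Hx' Hy').
  pose proof (lipschitz2_on_div K _ gs Fs gs_pos (rhs_s_lipschitz_on K HK) x y x' y' Hx Hy Hx' Hy').
  pose proof (Rabs_pos (x - x')). pose proof (Rabs_pos (y - y')).
  apply gronwall_quadratic; nra.
Qed.

(* Gronwall: [exp (- 4 L t) |U - Y|^2] cannot leave [0], because near the bounded
   solution [Y] the right-hand side is Lipschitz. *)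
Lemma solution_unique M T Ua Us Ya Ys :
  solution_on ga gs lam eps sigB q beta_a beta_s Ta0 Ts0 T Ua Us ->
  solution_on ga gs lam eps sigB q beta_a beta_s Ta0 Ts0 T Ya Ys ->
  (forall t, 0 <= t < T -> Rabs (Ya t) <= M /\ Rabs (Ys t) <= M) ->
  forall t, 0 <= t < T -> Ua t = Ya t /\ Us t = Ys t.
Proof.
  intros HU HY HYb t Ht.
  assert (HM : 0 <= M) by (destruct (HYb t Ht) as [H _]; pose proof (Rabs_pos (Ya t)); lra).
  set (K := M + 1). set (L := rhs_lip_const K / ga + rhs_lip_const K / gs).
  pose proof HU as [HUa0 [HUs0 [HUa_rc [HUs_rc HdU]]]].
  pose proof HY as [HYa0 [HYs0 [HYa_rc [HYs_rc HdY]]]].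
  set (D := fun s => (Ua s - Ya s) ^ 2 + (Us s - Ys s) ^ 2).
  assert (HD0 : forall s, D s * exp (- (4 * L) * s) <= 0 -> Ua s = Ya s /\ Us s = Ys s).
  { intros s Hs. pose proof (exp_pos (- (4 * L) * s)).
    pose proof (pow2_ge_0 (Ua s - Ya s)). pose proof (pow2_ge_0 (Us s - Ys s)).
    assert (HDs : D s <= 0) by (unfold D in *; nra). destruct (sqr_sum_nonpos _ _ HDs). lra. }
  apply HD0. revert t Ht.
  apply (nonpos_barrier (fun s => D s * exp (- (4 * L) * s))
    (fun s => (2 * (Ua s - Ya s) * (Fa (Ua s) (Us s) / ga - Fa (Ya s) (Ys s) / ga)
               + 2 * (Us s - Ys s) * (Fs (Ua s) (Us s) / gs - Fs (Ya s) (Ys s) / gs)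
               - 4 * L * ((Ua s - Ya s) ^ 2 + (Us s - Ys s) ^ 2)) * exp (- (4 * L) * s))
    T (fun s => Rabs (Ua s) <= K /\ Rabs (Us s) <= K)).
  - unfold D. rewrite HUa0, HUs0, HYa0, HYs0, !Rminus_eq_0. simpl. lra.
  - assert (Hsq : forall x, continuous (fun y => y ^ 2) x)
      by (intros x; apply (ex_derive_continuous (fun y => y ^ 2)); auto_derive; exact I).
    apply right_cont_mult; [apply right_cont_plus|].
    + apply (right_cont_comp (fun y => y ^ 2) (fun s => Ua s - Ya s)); [apply Hsq | apply right_cont_minus; assumption].
    + apply (right_cont_comp (fun y => y ^ 2) (fun s => Us s - Ys s)); [apply Hsq | apply right_cont_minus; assumption].
    + apply continuous_right_cont, (ex_derive_continuous (fun s => exp (- (4 * L) * s))). auto_derive. exact I.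
  - intros s Hs. destruct (HdU s Hs), (HdY s Hs). apply is_derive_weighted_sqr_dist; assumption.
  - intros s Hs Hg. destruct (HD0 s Hg) as [Ea Es]. destruct (HYb s Hs) as [Ba Bs].
    eapply filter_imp; [|exact (solution_locally_bounded T Ua Us s HU Hs)].
    intros r. rewrite Ea, Es. unfold K. lra.
  - intros s Hs _ [Qa Qs]. destruct (HYb s ltac:(lra)) as [Ba Bs].
    assert (Hin := rhs_inner_diff_le K (Ua s) (Us s) (Ya s) (Ys s)
                     ltac:(unfold K; lra) Qa Qs ltac:(unfold K; lra) ltac:(unfold K; lra)).
    fold L in Hin. pose proof (exp_pos (- (4 * L) * s)). nra.
Qed.

Lemma solution_positive (Ya Ys : R -> R) :
  (forall t, 0 < t -> is_derive Ya t (Fa (Ya t) (Ys t) / ga) /\ is_derive Ys t (Fs (Ya t) (Ys t) / gs)) ->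
  (forall t, 0 <= t -> 0 <= Ya t /\ 0 <= Ys t) ->
  forall t, 0 < t -> 0 < Ya t /\ 0 < Ys t.
Proof.
  intros Hd Hnn t Ht.
  assert (Hs : 0 < Ys t).
  { destruct (Rle_lt_or_eq _ _ (proj2 (Hnn t (Rlt_le _ _ Ht)))) as [|E]; [assumption|exfalso].
    destruct (is_derive_pos_root Ys 0 t _ Ht (proj2 (Hd t Ht))) as [s [Hs Hneg]].
    - rewrite <- E. apply Rdiv_lt_0_compat; [apply rhs_s_zero_pos, Hnn; lra | exact gs_pos].
    - symmetry. exact E.
    - pose proof (proj2 (Hnn s ltac:(lra))). lra. }
  split; [|exact Hs].
  destruct (Rle_lt_or_eq _ _ (proj1 (Hnn t (Rlt_le _ _ Ht)))) as [|E]; [assumption|exfalso].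
  destruct (is_derive_pos_root Ya 0 t _ Ht (proj1 (Hd t Ht))) as [s [Hs' Hneg]].
  - rewrite <- E. apply Rdiv_lt_0_compat; [|exact ga_pos].
    pose proof (rhs_a_zero_ge (Ys t) ltac:(lra)). pose proof (pow_lt (Ys t) 4 Hs).
    assert (0 < eps * sigB * Ys t ^ 4) by (apply Rmult_lt_0_compat; [apply Rmult_lt_0_compat|]; lra). lra.
  - symmetry. exact E.
  - pose proof (proj1 (Hnn s ltac:(lra))). lra.
Qed.

End Model.

Theorem proposition2p1
  (ga gs lam q sigB eps : R) (beta_a beta_s : R -> R) (Ta0 Ts0 : R)
  (hga : 0 < ga) (hgs : 0 < gs) (hlam : 0 <= lam) (hq : 0 < q)
  (hsig : 0 < sigB) (heps : 0 < eps < 2)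
  (hLa : lipschitz beta_a) (hLs : lipschitz beta_s)
  (hba : forall x, 0 <= beta_a x) (hbs : forall x, 0 < beta_s x)
  (hTa0 : 0 <= Ta0) (hTs0 : 0 <= Ts0) :
  exists Ta Ts : R -> R,
    (* defined (a solution) on the whole half-line [0, +oo) *)
    (forall T, 0 < T -> solution_on ga gs lam eps sigB q beta_a beta_s Ta0 Ts0 T Ta Ts) /\
    (* uniqueness: any solution on any [0, T) coincides with it there *)
    (forall T (Ua Us : R -> R), 0 < T ->
       solution_on ga gs lam eps sigB q beta_a beta_s Ta0 Ts0 T Ua Us ->
       forall t, 0 <= t < T -> Ua t = Ta t /\ Us t = Ts t) /\
    (* boundedness on [0, +oo) *)
    (exists M, forall t, 0 <= t -> Rabs (Ta t) <= M /\ Rabs (Ts t) <= M) /\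
    (* positivity on (0, +oo) *)
    (forall t, 0 < t -> 0 < Ta t /\ 0 < Ts t).
Proof.
  destruct hLa as [La [HLa0 HLa]], hLs as [Ls [HLs0 HLs]].
  destruct (global_solution ga gs lam q sigB eps La Ls beta_a beta_s hga hgs hlam hq hsig heps
              HLa0 HLs0 HLa HLs hba hbs Ta0 Ts0 hTa0 hTs0) as [Ta [Ts [M [Hsol Hrange]]]].
  assert (Hbnd : forall t, 0 <= t -> Rabs (Ta t) <= M /\ Rabs (Ts t) <= M).
  { intros t Ht. destruct (Hrange t Ht). rewrite !Rabs_pos_eq by lra. lra. }
  exists Ta, Ts. split; [intros T _; apply Hsol|split; [|split]].
  - intros T Ua Us _ HU.
    exact (solution_unique ga gs lam q sigB eps La Ls beta_a beta_s hga hgs hlam hq hsig heps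
             HLa0 HLs0 HLa HLs Ta0 Ts0 M T Ua Us Ta Ts HU (Hsol T) (fun s Hs => Hbnd s (proj1 Hs))).
  - exists M. exact Hbnd.
  - apply (solution_positive ga gs lam q sigB eps beta_a beta_s hga hgs hlam hq hsig heps hba hbs).
    + intros t Ht. exact (proj2 (proj2 (proj2 (proj2 (Hsol (t + 1))))) t ltac:(lra)).
    + intros t Ht. destruct (Hrange t Ht). lra.
Qed.
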